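(* Let $\Gamma$ be a distance-regular graph with classical parameters $(D,b,\alpha,\beta)$ such that $b\ge2$, $b-1\ge\alpha\ge1$ and $D\ge3$, geometric with respect to a set $\mathcal C$ of Delsarte cliques (members of $\mathcal C$ are called lines). Let $r=[D]$. Assume that for every vertex $x$ the local graph at $x$ is the $\alpha$-clique extension of a $\frac{\beta}{\alpha}\times r$-grid, and assume $\beta>\alpha r$. Let $M$ be an assembly and $x$ a vertex at distance 2 from $M$. Let $B=\Gamma_2(x)\cap M$ and $L(B)=\{\ell\cap B : \ell\in\mathcal C,\ |\ell\cap B|\ge 2\}$. Then $(B,L(B))$ is a $2$-$(\alpha(b+1)+1,\alpha+1,1)$-design. In particular $\alpha+1$ divides $b(b+1)$.
   Context: Distance-regular graph with intersection numbers $b_i,c_i$, valency $k=b_0$; $\Gamma_i(x)$ is the set of vertices at distance $i$ from $x$. For integer $b\ne1$, $[j]=\frac{b^j-1}{b-1}$. Classical parameters $(D,b,\alpha,\beta)$: diameter $D$, $b_i=([D]-[i])(\beta-\alpha[i])$, $c_i=[i](1+\alpha[i-1])$. A Delsarte clique is a clique with $1+\frac{k}{-\theta_{\min}}$ vertices, $\theta_{\min}$ the smallest adjacency eigenvalue; geometric with respect to $\mathcal C$ means every edge lies in exactly one member of $\mathcal C$. An assembly is a maximal clique of $\Gamma$ not in $\mathcal C$. $d(x,M)=\min_{y\in M}d(x,y)$. The $m\times n$-grid is $K_m\Box K_n$; the $s$-clique extension of $\Delta$ replaces each vertex by an $s$-clique, vertices in distinct cliques adjacent iff the original vertices are adjacent.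 A $t$-$(v,k,\lambda)$-design is a pair $(\mathcal P,\mathcal B)$ with $|\mathcal P|=v$, $\mathcal B$ a set of $k$-subsets of $\mathcal P$, such that every $t$-subset of $\mathcal P$ lies in exactly $\lambda$ members of $\mathcal B$. *)

From HB Require Import structures.
From mathcomp Require Import all_boot all_order all_algebra.
From mathcomp Require Import algC.
Set Implicit Arguments. Unset Strict Implicit. Unset Printing Implicit Defensive.
Import Order.TTheory GRing.Theory Num.Theory.

Section Graphs.
Variable T : finType.
Variable adj : rel T.

Definition simple_graph : Prop := symmetric adj /\ irreflexive adj.

Fixpoint ball (n : nat) (x : T) : {set T} :=
  match n with
  | 0 => [set x]
  | n'.+1 => ball n' x :|: [set y | [exists z in ball n' x, adj z y]]
  end.

Definition Gamma (i : nat) (x : T) : {set T} :=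
  match i with
  | 0 => [set x]
  | i'.+1 => ball i'.+1 x :\: ball i' x
  end.

Definition qint (b j : nat) : nat := (b ^ j - 1) %/ (b - 1).

Definition has_diameter (D : nat) : Prop :=
  (forall x y : T, y \in ball D x) /\ (exists x y : T, y \in Gamma D x).

Definition distance_regular (D : nat) (bi ci : nat -> nat) : Prop :=
  simple_graph /\ has_diameter D /\
  (forall i x y, i <= D -> y \in Gamma i x ->
      #|Gamma i.+1 x :&: Gamma 1 y| = bi i) /\
  (forall i x y, 1 <= i <= D -> y \in Gamma i x ->
      #|Gamma i.-1 x :&: Gamma 1 y| = ci i).

Definition classical_parameters (D b alpha beta : nat) : Prop :=
  exists bi ci : nat -> nat,
    distance_regular D bi ci /\
    (forall i : nat, i <= D ->
       ((bi i)%:Z = ((qint b D)%:Z - (qint b i)%:Z) *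
                    (beta%:Z - alpha%:Z * (qint b i)%:Z))%R) /\
    (forall i : nat, 1 <= i <= D ->
       ci i = qint b i * (1 + alpha * qint b i.-1)).

Definition is_clique (S : {set T}) : Prop :=
  forall u v, u \in S -> v \in S -> u != v -> adj u v.

Definition adj_mx : 'M[algC]_#|T| :=
  (\matrix_(i, j) (adj (enum_val i) (enum_val j))%:R)%R.

Definition min_eigenvalue (theta : algC) : Prop :=
  eigenvalue adj_mx theta /\
  (forall theta', eigenvalue adj_mx theta' -> (theta <= theta')%R).

(* Delsarte clique (k the valency) *)
Definition delsarte_clique (k : nat) (S : {set T}) : Prop :=
  is_clique S /\
  exists theta : algC, min_eigenvalue theta /\
    (#|S|%:R = 1 + k%:R / (- theta))%R.

Definition geometric (k : nat) (C : {set {set T}}) : Prop :=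
  (forall l, l \in C -> delsarte_clique k l) /\
  (forall x y, adj x y -> #|[set l in C | (x \in l) && (y \in l)]| = 1).

Definition maximal_clique (M : {set T}) : Prop :=
  is_clique M /\ forall v, v \notin M -> ~ is_clique (v |: M).

Definition assembly (C : {set {set T}}) (M : {set T}) : Prop :=
  maximal_clique M /\ M \notin C.

Definition dist_set_2 (x : T) (M : {set T}) : Prop :=
  (exists2 y, y \in M & y \in Gamma 2 x) /\
  (forall y, y \in M -> y \notin ball 1 x).

End Graphs.

Definition grid_adj (m n : nat) : rel ('I_m * 'I_n) :=
  fun u v => ((u.1 == v.1) && (u.2 != v.2)) || ((u.1 != v.1) && (u.2 == v.2)).

Definition clique_ext_adj (V : finType) (e : rel V) (s : nat) : rel (V * 'I_s) :=
  fun u v => ((u.1 == v.1) && (u.2 != v.2)) || e u.1 v.1.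

Definition local_graph_iso (T W : finType) (adj : rel T) (x : T) (f : rel W) : Prop :=
  exists phi : W -> T,
    injective phi /\ [set w | w in codom phi] = Gamma adj 1 x /\
    (forall u v, adj (phi u) (phi v) = f u v).

Definition is_design (T : finType) (t v k lambda : nat)
    (P : {set T}) (B : {set {set T}}) : Prop :=
  #|P| = v /\
  (forall blk, blk \in B -> blk \subset P /\ #|blk| = k) /\
  (forall S : {set T}, S \subset P -> #|S| = t ->
     #|[set blk in B | S \subset blk]| = lambda).

Definition lines_on (T : finType) (C : {set {set T}}) (B : {set T}) : {set {set T}} :=
  [set l :&: B | l in C & 2 <= #|l :&: B|].

Arguments grid_adj : clear implicits.
Arguments clique_ext_adj {V} e s.

From HB Require Import structures.
From mathcomp Require Import all_boot all_order all_algebra.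
From mathcomp Require Import algC.
From mathcomp Require Import ring zify.
Set Implicit Arguments. Unset Strict Implicit. Unset Printing Implicit Defensive.
Import Order.TTheory GRing.Theory Num.Theory.

(* Write r = [D] and m = beta / alpha.  In the local graph at y, the alpha-clique
   extension of the m x r grid, every clique lies in a row or a column, so the maximal
   cliques through y are y together with a grid row (alpha r + 1 vertices) or a grid
   column (alpha m + 1 vertices).  The column cliques cover every vertex r times and
   every edge once, hence A + r I is positive semidefinite, theta_min >= -r, and a
   Delsarte clique has at least 1 + k / r = alpha m + 1 vertices: the lines are the
   column cliques, and an assembly M is the row clique through any of its vertices p.
   For p in B the c_2 = (b + 1)(alpha + 1) common neighbours of x and p meet b + 1 rows
   and b + 1 columns of the grid at p in alpha + 1 cells each.  All cells in these rows
   and columns are within distance 2 of x, and since b_2 counts exactly the remaining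
   cells, these are at distance 3.  Hence B is p together with the cells of the row of M
   lying in those b + 1 columns: every line meets B in alpha + 1 points or in at most one,
   and two points of the clique B lie on a unique line.  Divisibility is the integrality
   of the number of blocks of the resulting 2-design. *)

Section Distances.
Variables (T : finType) (adj : rel T).

Lemma in_ball0 x y : (y \in ball adj 0 x) = (y == x).
Proof. by rewrite /= inE. Qed.

Lemma in_ballS n x y :
  (y \in ball adj n.+1 x) = (y \in ball adj n x) || [exists z in ball adj n x, adj z y].
Proof. by rewrite /= !inE. Qed.

Lemma ball_ballS n x y : y \in ball adj n x -> y \in ball adj n.+1 x.
Proof. by rewrite in_ballS => ->. Qed.

Lemma ball_adj n x y z : y \in ball adj n x -> adj y z -> z \in ball adj n.+1 x.
Proof.
by move=> yx yz; rewrite in_ballS; apply/orP; right; apply/existsP; exists y; rewrite yx.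
Qed.

Lemma in_GammaS i x y :
  (y \in Gamma adj i.+1 x) = (y \in ball adj i.+1 x) && (y \notin ball adj i x).
Proof. by rewrite /Gamma inE andbC. Qed.

Lemma Gamma_ball i x y : y \in Gamma adj i x -> y \in ball adj i x.
Proof. by case: i => [/set1P ->|i]; rewrite ?in_ball0 ?in_GammaS // => /andP []. Qed.

Lemma GammaS_notin_ball i x y : y \in Gamma adj i.+1 x -> y \notin ball adj i x.
Proof. by rewrite in_GammaS => /andP []. Qed.

Hypothesis adj_irr : irreflexive adj.

Lemma in_Gamma1 x y : (y \in Gamma adj 1 x) = adj x y.
Proof.
rewrite in_GammaS in_ballS !in_ball0.
apply/idP/idP => [|xy].
  case/andP => /orP [/eqP ->|/existsP [z /andP []]]; first by rewrite eqxx.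
  by rewrite in_ball0 => /eqP ->.
apply/andP; split; first by apply/orP; right; apply/existsP; exists x; rewrite in_ball0 eqxx.
by apply: contraTneq xy => ->; rewrite adj_irr.
Qed.

End Distances.

Lemma card_uniform_fibers (X Y : finType) (g : X -> Y) (U : {set X}) c :
  {in U, forall u, #|[set v in U | g v == g u]| = c} -> #|U| = #|g @: U| * c.
Proof.
move=> fib; rewrite -sum1_card (partition_big_imset g) -sum_nat_const.
apply: eq_bigr => _ /imsetP [u uU ->]; rewrite -(fib u uU) sum1_card.
by apply: eq_card => v; rewrite inE.
Qed.

Lemma double_count (X Y : finType) (A : {set X}) (B : {set Y}) (R : X -> Y -> bool) :
  \sum_(x in A) #|[set y in B | R x y]| = \sum_(y in B) #|[set x in A | R x y]|.
Proof.
under eq_bigr do rewrite -sum1dep_card big_mkcondr /=.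
by rewrite exchange_big; apply: eq_bigr => y _; rewrite -sum1dep_card big_mkcondr.
Qed.

Section Designs.
Variables (X : finType) (v k : nat) (P : {set X}) (L : {set {set X}}).
Hypothesis design : is_design 2 v k 1 P L.

Lemma design_replication q : q \in P -> #|[set l in L | q \in l]| * k.-1 = v.-1.
Proof.
have [cardP [blocks pairs]] := design; move=> qP.
have -> : v.-1 = #|P :\ q| by rewrite -cardP (cardsD1 q P) qP.
rewrite -sum_nat_const.
transitivity (\sum_(l in [set l in L | q \in l]) #|[set y in P :\ q | y \in l]|).
  apply: eq_bigr => l; rewrite inE => /andP [lL ql].
  have [lP <-] := blocks l lL; rewrite (cardsD1 q l) ql /=.
  by rewrite -[[set y in _ | _]]/((P :\ q) :&: l) setIDAC (setIidPr lP).
rewrite double_count -sum1_card; apply: eq_bigr => y; rewrite !inE => /andP [yq yP].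
rewrite -(pairs [set q; y]) ?cards2 1?eq_sym ?yq ?subUset ?sub1set ?qP ?yP //.
by apply: eq_card => l; rewrite !inE subUset !sub1set andbA.
Qed.

Lemma design_card_blocks rep :
  {in P, forall q, #|[set l in L | q \in l]| = rep} -> #|L| * k = v * rep.
Proof.
have [cardP [blocks _]] := design; move=> reps.
rewrite -sum_nat_const -cardP -sum_nat_const.
transitivity (\sum_(l in L) #|[set y in P | y \in l]|).
  apply: eq_bigr => l lL; have [lP <-] := blocks l lL.
  by rewrite -[[set y in _ | _]]/(P :&: l) (setIidPr lP).
by rewrite -double_count; apply: eq_bigr => q qP; rewrite reps.
Qed.

End Designs.

(* Each point lies on c blocks, and counting flags gives |L| (a + 1) = (a c + 1) c. *)
Lemma design_dvd (X : finType) a c (P : {set X}) (L : {set {set X}}) :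
  0 < a -> is_design 2 (a * c + 1) (a + 1) 1 P L -> a + 1 %| c.-1 * c.
Proof.
move=> a_gt0 design.
have reps : {in P, forall q, #|[set l in L | q \in l]| = c}.
  move=> q /(design_replication design) /eqP.
  by rewrite !addn1 /= [a * c]mulnC eqn_pmul2r // => /eqP.
have flags := design_card_blocks design reps.
case: c {design reps} flags => [|c] flags /=; first exact: dvdn0.
rewrite -(dvdn_addl _ (dvdn_mull #|L| (dvdnn (a + 1)))).
have -> : c * c.+1 + #|L| * (a + 1) = (a + 1) * (c.+1 * c.+1) by rewrite flags; ring.
exact: dvdn_mulr.
Qed.

Section Cliques.
Variables (T : finType) (adj : rel T).

Lemma is_clique_subset (A B : {set T}) : is_clique adj A -> B \subset A -> is_clique adj B.
Proof. by move=> cA BA u v uB vB; apply: cA; apply: (subsetP BA). Qed.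

Lemma maximal_clique_eq (Q S : {set T}) :
  maximal_clique adj Q -> is_clique adj S -> Q \subset S -> Q = S.
Proof.
move=> [_ maxQ] cS QS; apply/eqP; rewrite eqEsubset QS; apply/subsetP => z zS.
apply/negPn/negP => zQ; apply: (maxQ z zQ); apply: (is_clique_subset cS).
by rewrite subUset sub1set zS.
Qed.

End Cliques.

Section CliqueCoverBound.
Local Open Scope ring_scope.
Variables (T : finType) (adj : rel T) (F : {set {set T}}) (r : nat).
Hypothesis adj_sym : symmetric adj.
Hypothesis adj_irr : irreflexive adj.
Hypothesis cover_vertex : forall x, #|[set S in F | x \in S]| = r.
Hypothesis cover_edge :
  forall x y, x != y -> #|[set S in F | (x \in S) && (y \in S)]| = adj x y.

(* With N the vertex-clique incidence matrix, A + r I = N N^T is positive semidefinite. *)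
Lemma eigenvalue_ge_neg_cover th : eigenvalue (adj_mx adj) th -> 0 <= r%:R + th.
Proof.
case/eigenvalueP => v vA v_neq0; pose f y := v 0 (enum_rank y).
have eigen z : \sum_(y | adj z y) f y = th * f z.
  move/rowP: vA => /(_ (enum_rank z)); rewrite !mxE => <-.
  have fE j : v 0 j = f (enum_val j) by rewrite /f enum_valK.
  under [RHS]eq_bigr => j _ do rewrite mxE enum_rankK fE.
  rewrite -(big_enum_val (fun y => f y * (adj y z)%:R)) /= big_mkcond /=.
  by apply: eq_bigr => y _; rewrite [adj y z]adj_sym; case: (adj z y); rewrite ?mulr1 ?mulr0.
have cover_sum x : \sum_(S in F | x \in S) \sum_(y in S) f y = (r%:R + th) * f x.
  have count y : \sum_(S in F | x \in S) (if y \in S then f y else 0)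
      = f y *+ #|[set S in F | (x \in S) && (y \in S)]|.
    by rewrite -big_mkcondr -sumr_const; apply: eq_bigl => S; rewrite !inE andbA.
  under eq_bigr do rewrite big_mkcond /=.
  rewrite exchange_big /= (bigD1 x) //= count mulrDl -eigen.
  rewrite [in RHS]big_mkcond [in RHS](bigD1 x) //= adj_irr add0r; congr (_ + _).
    rewrite mulr_natl -(cover_vertex x); congr (_ *+ _).
    by apply: eq_card => S; rewrite !inE andbb.
  by apply: eq_bigr => y yx; rewrite count cover_edge 1?eq_sym // mulrb.
have norm_gt0 : 0 < \sum_x f x * (f x)^*.
  have [j vj] : exists j, v 0 j != 0.
    apply/existsP; apply: contraR v_neq0 => /existsPn v0.
    by apply/eqP/rowP => j; rewrite mxE; apply/eqP/negPn.
  rewrite (bigD1 (enum_val j)) //= ltr_wpDr ?sumr_ge0 // => [y _|].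
    exact: mul_conjC_ge0.
  by rewrite mul_conjC_gt0 /f enum_valK.
rewrite -(pmulr_lge0 _ norm_gt0) mulr_sumr.
under eq_bigr => x _ do rewrite (mulrC (f x)) mulrCA -cover_sum mulr_sumr.
rewrite (exchange_big_dep (mem F)) /= => [|x S _ /andP [] //].
apply: sumr_ge0 => S SF; rewrite (eq_bigl (mem S)) => [|x]; last by rewrite SF.
by rewrite -mulr_suml -rmorph_sum mulrC mul_conjC_ge0.
Qed.

End CliqueCoverBound.

Section Geometric.
Variables (T : finType) (adj : rel T) (k : nat) (C : {set {set T}}).
Hypothesis geom : geometric adj k C.

Lemma line_through x y : adj x y -> exists2 l, l \in C & (x \in l) && (y \in l).
Proof.
move=> xy; have /eqP/cards1P [l lxy] := geom.2 x y xy.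
by have := set11 l; rewrite -lxy inE => /andP [lC xyl]; exists l.
Qed.

Lemma line_unique x y l l' : adj x y -> l \in C -> l' \in C ->
  (x \in l) && (y \in l) -> (x \in l') && (y \in l') -> l = l'.
Proof.
move=> xy lC l'C xyl xyl'; have /eqP/cards1P [l0 lxy] := geom.2 x y xy.
have : l \in [set l in C | (x \in l) && (y \in l)] by rewrite inE lC.
have : l' \in [set l in C | (x \in l) && (y \in l)] by rewrite inE l'C.
by rewrite lxy !inE => /eqP -> /eqP ->.
Qed.

End Geometric.

Lemma exists_ord_neq n (j : 'I_n) : 1 < n -> exists j' : 'I_n, j' != j.
Proof.
move=> n_gt1; have n_gt0 := ltnW n_gt1.
by case: j => [[|k] k_lt]; [exists (Ordinal n_gt1) | exists (Ordinal n_gt0)].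
Qed.

Lemma setI_imset (X Y : finType) (f : X -> Y) (A : {set X}) (S : {set Y}) :
  S :&: f @: A = f @: [set u in A | f u \in S].
Proof.
apply/setP => z; apply/setIP/imsetP => [[zS /imsetP [u uA zu]]|[u]].
  by exists u; rewrite // inE uA -zu.
by rewrite inE => /andP [uA fuS] ->; split; last exact: imset_f.
Qed.

Section GridCliqueExtension.
Context {m r al : nat}.
Local Notation cell := (('I_m * 'I_r) * 'I_al)%type.

Definition grid_ext : rel cell := clique_ext_adj (grid_adj m r) al.
Definition grid_row (i : 'I_m) : {set cell} := [set u | u.1.1 == i].
Definition grid_col (j : 'I_r) : {set cell} := [set u | u.1.2 == j].

Lemma grid_extE u v : grid_ext u v = (u != v) && ((u.1.1 == v.1.1) || (u.1.2 == v.1.2)).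
Proof.
case: u v => [[i j] a] [[i' j'] a']; rewrite /grid_ext /clique_ext_adj /grid_adj /=.
by rewrite !xpair_eqE; case: (i =P i'); case: (j =P j'); case: (a =P a').
Qed.

Lemma card_grid_row i : #|grid_row i| = r * al.
Proof.
have -> : grid_row i = setX (setX [set i] setT) setT by apply/setP => u; rewrite !inE !andbT.
by rewrite !cardsX cards1 !cardsT !card_ord mul1n.
Qed.

Lemma card_grid_col j : #|grid_col j| = m * al.
Proof.
have -> : grid_col j = setX (setX setT [set j]) setT by apply/setP => u; rewrite !inE andbT.
by rewrite !cardsX cards1 !cardsT !card_ord muln1.
Qed.

Lemma card_grid_rowIcol i j : #|grid_row i :&: grid_col j| = al.
Proof.
have -> : grid_row i :&: grid_col j = setX [set (i, j)] setT.
  by apply/setP => [[[i' j'] a]]; rewrite !inE xpair_eqE andbT.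
by rewrite cardsX cards1 cardsT card_ord mul1n.
Qed.

Definition grid_rows (I : {set 'I_m}) : {set cell} := [set u | u.1.1 \in I].
Definition grid_cols (J : {set 'I_r}) : {set cell} := [set u | u.1.2 \in J].

Lemma card_grid_rowIcols i J : #|grid_row i :&: grid_cols J| = #|J| * al.
Proof.
have -> : grid_row i :&: grid_cols J = setX (setX [set i] J) setT.
  by apply/setP => u; rewrite !inE andbT.
by rewrite !cardsX cards1 cardsT card_ord mul1n.
Qed.

Lemma card_grid_off_rows_cols I J :
  #|~: grid_rows I :&: ~: grid_cols J| = (m - #|I|) * (r - #|J|) * al.
Proof.
have -> : ~: grid_rows I :&: ~: grid_cols J = setX (setX (~: I) (~: J)) setT.
  by apply/setP => u; rewrite !inE andbT.
have cardC (Y : finType) (A : {set Y}) : #|~: A| = #|Y| - #|A| by rewrite -(cardsC A) addKn.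
by rewrite !cardsX !cardC cardsT !card_ord.
Qed.

Lemma grid_rowIcolsIcol i J j : grid_row i :&: grid_cols J :&: grid_col j =
  if j \in J then grid_row i :&: grid_col j else set0.
Proof.
case: ifP => jJ; apply/setP => u; rewrite !inE.
  by have [->|] := eqVneq u.1.2 j; rewrite ?jJ ?andbT ?andbF.
by apply: contraFF jJ => /andP [/andP [_ uJ] /eqP <-].
Qed.

Definition grid_clique (Q : {set cell}) := {in Q &, forall u v, u != v -> grid_ext u v}.

Lemma grid_clique_row i : grid_clique (grid_row i).
Proof. by move=> u v; rewrite !inE grid_extE => /eqP -> /eqP -> ->; rewrite eqxx. Qed.

Lemma grid_clique_col j : grid_clique (grid_col j).
Proof. by move=> u v; rewrite !inE grid_extE => /eqP -> /eqP -> ->; rewrite eqxx orbT. Qed.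

Lemma grid_row_nbhs i u : u \notin grid_row i ->
  [set v in grid_row i | grid_ext u v] = grid_row i :&: grid_col u.1.2.
Proof.
rewrite inE => ui; apply/setP => v; rewrite !inE grid_extE.
case: (eqVneq v.1.1 i) => [vi|]; rewrite ?andbF //= -vi eq_sym in ui *.
by rewrite (negbTE ui) andb_idl // => _; apply: contraNneq ui => ->.
Qed.

Lemma grid_col_nbhs j u : u \notin grid_col j ->
  [set v in grid_col j | grid_ext u v] = grid_row u.1.1 :&: grid_col j.
Proof.
rewrite inE => uj; apply/setP => v; rewrite !inE grid_extE.
case: (eqVneq v.1.2 j) => [vj|]; rewrite ?andbF ?andbT //= -vj eq_sym in uj *.
by rewrite (negbTE uj) orbF andb_idl // => _; apply: contraNneq uj => ->.
Qed.

Hypotheses (m_gt1 : 1 < m) (r_gt1 : 1 < r) (al_gt0 : 0 < al).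

Lemma grid_clique_sub_row_col Q :
  grid_clique Q -> (exists i, Q \subset grid_row i) \/ (exists j, Q \subset grid_col j).
Proof.
move=> cQ; have [/existsP [u /andP [uQ /existsP [v /andP [vQ uv]]]]|same_row] :=
  boolP [exists u in Q, exists v in Q, u.1.1 != v.1.1]; last first.
  have [u uQ|Q0] := pickP (mem Q); last first.
    by left; exists (Ordinal (ltnW m_gt1)); apply/subsetP => w; rewrite [w \in Q]Q0.
  left; exists u.1.1; apply/subsetP => w wQ; rewrite inE; apply: contraNT same_row => wu.
  by apply/existsP; exists w; rewrite wQ; apply/existsP; exists u; rewrite [u \in Q]uQ.
have col_uv : u.1.2 == v.1.2.
  have u_neq_v : u != v by apply: contraNneq uv => ->.
  by move: (cQ u v uQ vQ u_neq_v); rewrite grid_extE (negbTE uv) => /andP [].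
right; exists u.1.2; apply/subsetP => w wQ; rewrite inE.
have [-> //|wu] := eqVneq w u; have [->|wv] := eqVneq w v; first by rewrite eq_sym.
move: (cQ w u wQ uQ wu) (cQ w v wQ vQ wv); rewrite !grid_extE wu wv /=.
case/orP => [/eqP wu1|]; last by rewrite eq_sym.
by case/orP => [/eqP wv1|/eqP ->]; [rewrite -wu1 wv1 eqxx in uv | rewrite eq_sym].
Qed.

Lemma grid_row_maximal i u : u \notin grid_row i -> exists2 w, w \in grid_row i & ~~ grid_ext u w.
Proof.
move=> ui; have [j uj] := exists_ord_neq u.1.2 r_gt1.
exists ((i, j), Ordinal al_gt0); first by rewrite inE.
have : ((i, j), Ordinal al_gt0) \notin grid_row i :&: grid_col u.1.2.
  by rewrite !inE /= (negbTE uj) andbF.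
by rewrite -(grid_row_nbhs ui) !inE eqxx.
Qed.

Lemma grid_col_maximal j u : u \notin grid_col j -> exists2 w, w \in grid_col j & ~~ grid_ext u w.
Proof.
move=> uj; have [i ui] := exists_ord_neq u.1.1 m_gt1.
exists ((i, j), Ordinal al_gt0); first by rewrite inE.
have : ((i, j), Ordinal al_gt0) \notin grid_row u.1.1 :&: grid_col j.
  by rewrite !inE /= (negbTE ui).
by rewrite -(grid_col_nbhs uj) !inE eqxx.
Qed.

End GridCliqueExtension.

Section LocalGrid.
Variables (T : finType) (adj : rel T) (m r al : nat).
Hypotheses (adj_sym : symmetric adj) (adj_irr : irreflexive adj).
Hypotheses (m_gt1 : 1 < m) (r_gt1 : 1 < r) (al_gt0 : 0 < al) (r_lt_m : r < m).
Local Notation cell := (('I_m * 'I_r) * 'I_al)%type.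
Implicit Types (A : {set cell}) (S Q : {set T}).

Variable phi : T -> cell -> T.
Hypothesis phi_local : forall y, injective (phi y) /\
  [set z | z in codom (phi y)] = Gamma adj 1 y /\
  forall u v, adj (phi y u) (phi y v) = grid_ext u v.

Lemma phi_inj y : injective (phi y).
Proof. by case: (phi_local y). Qed.

Lemma phi_adj y u v : adj (phi y u) (phi y v) = grid_ext u v.
Proof. by case: (phi_local y) => _ []. Qed.

Lemma Gamma1_imset y : Gamma adj 1 y = phi y @: setT.
Proof.
case: (phi_local y) => _ [<- _]; apply/setP => z.
apply/imsetP/imsetP => [[_ /codomP [u ->] ->]|[u _ ->]]; first by exists u.
by exists (phi y u); rewrite ?codom_f.
Qed.

Lemma Gamma1_phi y z : z \in Gamma adj 1 y -> exists u, z = phi y u.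
Proof. by rewrite Gamma1_imset => /imsetP [u _ ->]; exists u. Qed.

Lemma adj_phi y u : adj y (phi y u).
Proof. by rewrite -in_Gamma1 // Gamma1_imset imset_f ?in_setT. Qed.

Lemma phi_neq y u : phi y u != y.
Proof. by apply: contraTneq (adj_phi y u) => ->; rewrite adj_irr. Qed.

Lemma mem_phi y (A : {set cell}) u : (phi y u \in phi y @: A) = (u \in A).
Proof. exact/mem_imset/phi_inj. Qed.

Lemma notin_phi y (A : {set cell}) : y \notin phi y @: A.
Proof. by apply/imsetP => [[u _ yu]]; move: (phi_neq y u); rewrite -yu eqxx. Qed.

Definition cone y (A : {set cell}) := y |: phi y @: A.
Definition row_clique y i := cone y (grid_row i).
Definition col_clique y j := cone y (grid_col j).

Lemma card_cone y A : #|cone y A| = #|A|.+1.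
Proof. by rewrite cardsU1 notin_phi card_imset //; exact: phi_inj. Qed.

Lemma card_row_clique y i : #|row_clique y i| = (r * al).+1.
Proof. by rewrite card_cone card_grid_row. Qed.

Lemma card_col_clique y j : #|col_clique y j| = (m * al).+1.
Proof. by rewrite card_cone card_grid_col. Qed.

Lemma in_cone y A z : z \in cone y A -> z = y \/ exists2 u, u \in A & z = phi y u.
Proof. by case/setU1P => [->|/imsetP [u uA ->]]; [left | right; exists u]. Qed.

Lemma setI_cone_in y A S :
  y \in S -> S :&: cone y A = cone y [set u in A | phi y u \in S].
Proof. by move=> yS; rewrite setIUr setI_imset (setIidPr _) // sub1set. Qed.

Lemma setI_cone_notin y A S :
  y \notin S -> S :&: cone y A = phi y @: [set u in A | phi y u \in S].
Proof.
move=> yS; rewrite setIUr setI_imset (_ : S :&: _ = set0) ?set0U //.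
by apply/setP => z; rewrite !inE; apply: contraNF yS => /andP [zS /eqP <-].
Qed.

Lemma cone_clique y A : grid_clique A -> is_clique adj (cone y A).
Proof.
move=> cA z1 z2 /in_cone [->|[u uA ->]] /in_cone [->|[v vA ->]]; rewrite ?eqxx //.
- by rewrite adj_phi.
- by rewrite adj_sym adj_phi.
- by move=> uv; rewrite phi_adj cA //; apply: contraNneq uv => ->.
Qed.

Lemma cone_maximal y A : grid_clique A ->
  (forall u, u \notin A -> exists2 w, w \in A & ~~ grid_ext u w) ->
  maximal_clique adj (cone y A).
Proof.
move=> cA maxA; split=> [|z zA cz]; first exact: cone_clique.
have yA : y \in z |: cone y A by rewrite !inE eqxx orbT.
have zy : z != y by apply: contraNneq zA => ->; rewrite setU11.
have [u zu] : exists u, z = phi y u.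
  by apply: Gamma1_phi; rewrite in_Gamma1 // cz // ?setU11 // eq_sym.
have uA : u \notin A by apply: contra zA => uA; rewrite zu !inE mem_phi uA orbT.
have [w wA uw] := maxA u uA.
have wz : phi y w != z by rewrite zu (inj_eq (@phi_inj y)); apply: contraNneq uA => <-.
have : adj z (phi y w).
  by apply: cz; [exact: setU11 | rewrite !inE mem_phi wA !orbT | rewrite eq_sym].
by rewrite zu phi_adj (negbTE uw).
Qed.

Lemma row_clique_maximal y i : maximal_clique adj (row_clique y i).
Proof. by apply: cone_maximal; [exact: grid_clique_row | exact: grid_row_maximal]. Qed.

Lemma col_clique_maximal y j : maximal_clique adj (col_clique y j).
Proof. by apply: cone_maximal; [exact: grid_clique_col | exact: grid_col_maximal]. Qed.

Lemma clique_sub_cone y Q : is_clique adj Q -> y \in Q ->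
  (exists i, Q \subset row_clique y i) \/ (exists j, Q \subset col_clique y j).
Proof.
move=> cQ yQ; pose A0 := phi y @^-1: Q.
have cA : grid_clique A0.
  move=> u v; rewrite !inE => uQ vQ uv; rewrite -(phi_adj y) cQ //.
  by rewrite (inj_eq (@phi_inj y)).
have sub_cone A : A0 \subset A -> Q \subset cone y A.
  move=> A0A; apply/subsetP => z zQ; rewrite !inE; have [//|zy] := eqVneq z y.
  have [u zu] : exists u, z = phi y u by apply: Gamma1_phi; rewrite in_Gamma1 // cQ // eq_sym.
  by rewrite zu mem_phi (subsetP A0A) // inE -zu.
by case: (grid_clique_sub_row_col m_gt1 cA) => [[i /sub_cone]|[j /sub_cone]];
  [left; exists i | right; exists j].
Qed.

Lemma maximal_clique_cone y Q : maximal_clique adj Q -> y \in Q ->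
  (exists i, Q = row_clique y i) \/ (exists j, Q = col_clique y j).
Proof.
move=> maxQ yQ; case: (clique_sub_cone maxQ.1 yQ) => [[i Qi]|[j Qj]].
  by left; exists i; apply: (maximal_clique_eq maxQ) Qi; exact/cone_clique/grid_clique_row.
by right; exists j; apply: (maximal_clique_eq maxQ) Qj; exact/cone_clique/grid_clique_col.
Qed.

Lemma col_clique_neq_row_clique x y i j : col_clique x j != row_clique y i.
Proof.
apply: contraTneq r_lt_m => /(congr1 (fun S => #|S|)).
rewrite card_col_clique card_row_clique => /succn_inj /eqP.
by rewrite eqn_pmul2r // => /eqP ->; rewrite ltnn.
Qed.

Lemma col_clique_inj y : injective (col_clique y).
Proof.
move=> j j' jj'; pose u : cell := ((Ordinal (ltnW m_gt1), j), Ordinal al_gt0).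
have : phi y u \in col_clique y j' by rewrite -jj' !inE mem_phi inE eqxx orbT.
by rewrite !inE (negbTE (phi_neq y u)) mem_phi inE => /eqP.
Qed.

Lemma card_Gamma1_maximal_clique Q w x : maximal_clique adj Q -> w \in Q -> x \notin Q ->
  adj w x -> #|Gamma adj 1 x :&: Q| = al.+1.
Proof.
move=> maxQ wQ xQ wx; have [u xu] : exists u, x = phi w u by apply: Gamma1_phi; rewrite in_Gamma1.
have wx1 : w \in Gamma adj 1 x by rewrite in_Gamma1 // adj_sym.
have nbhs A : [set v in A | phi w v \in Gamma adj 1 x] = [set v in A | grid_ext u v].
  by apply/setP => v; rewrite in_set [RHS]in_set in_Gamma1 // xu phi_adj.
have [[i Qi]|[j Qj]] := maximal_clique_cone maxQ wQ; rewrite ?Qi ?Qj setI_cone_in // card_cone nbhs.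
  rewrite grid_row_nbhs ?card_grid_rowIcol //.
  by apply: contra xQ => ui; rewrite Qi xu !inE mem_phi ui orbT.
rewrite grid_col_nbhs ?card_grid_rowIcol //.
by apply: contra xQ => uj; rewrite Qj xu !inE mem_phi uj orbT.
Qed.

Definition col_cliques := [set col_clique y j | y : T, j : 'I_r].

Lemma col_cliques_through x : [set S in col_cliques | x \in S] = col_clique x @: setT.
Proof.
apply/setP => S; rewrite inE; apply/andP/imsetP => [[/imset2P [y j _ _ ->] xS]|[j _ ->]].
  have [[i e]|[j' ->]] := maximal_clique_cone (col_clique_maximal y j) xS; last by exists j'.
  by move: (col_clique_neq_row_clique y x i j); rewrite e eqxx.
by split; [apply/imset2P; exists x j | exact: setU11].
Qed.

Lemma eigenvalue_ge_neg_r th : eigenvalue (adj_mx adj) th -> (0 <= r%:R + th)%R.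
Proof.
apply: (eigenvalue_ge_neg_cover (F := col_cliques)) => // [x | x y xy].
  by rewrite col_cliques_through card_imset ?cardsT ?card_ord //; exact: col_clique_inj.
have -> : [set S in col_cliques | (x \in S) && (y \in S)] =
          col_clique x @: [set j | y \in col_clique x j].
  apply/setP => S; have /setP/(_ S) := col_cliques_through x; rewrite !inE andbA => ->.
  apply/andP/imsetP => [[/imsetP [j _ ->] yS]|[j yj ->]]; first by exists j; rewrite // in_set.
  by rewrite in_set in yj; rewrite imset_f ?in_setT.
rewrite card_imset; last exact: col_clique_inj.
have [xy_adj|xy_nadj] := boolP (adj x y).
  have [u ->] : exists u, y = phi x u by apply: Gamma1_phi; rewrite in_Gamma1.
  apply/eqP/cards1P; exists u.1.2; apply/setP => j.
  by rewrite !inE (negbTE (phi_neq x u)) mem_phi inE eq_sym.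
apply/eqP; rewrite cards_eq0; apply/eqP/setP => j; rewrite !inE [y == x]eq_sym (negbTE xy) /=.
by apply/imsetP => [[u _ yu]]; move: xy_nadj; rewrite yu adj_phi.
Qed.

Variable C : {set {set T}}.
Hypothesis geom : geometric adj (r * (al * m)) C.

(* A Delsarte clique has 1 + k / (- theta_min) >= 1 + k / r = al m + 1 vertices. *)
Lemma line_card_gt y l : l \in C -> y \in l -> al * m < #|l|.
Proof.
move=> lC yl; pose w : cell := ((Ordinal (ltnW m_gt1), Ordinal (ltnW r_gt1)), Ordinal al_gt0).
have [l0 l0C /andP [yl0 wl0]] := line_through geom (adj_phi y w).
have l0_gt1 : 1 < #|l0|.
  have <- : #|[set y; phi y w]| = 2 by rewrite cards2 eq_sym phi_neq.
  by rewrite subset_leq_card // subUset !sub1set yl0.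
have [_ [th0 [[ev0 min0] card_l0]]] := geom.1 l0 l0C.
have [_ [th [[ev min] card_l]]] := geom.1 l lC.
have th_th0 : th = th0 by apply: le_anti; rewrite min // min0.
rewrite {}th_th0 {ev min} in card_l.
set t := (- th0)%R in card_l0 card_l; set k := r * (al * m) in card_l0 card_l.
have t_le_r : (t <= r%:R)%R by rewrite /t -subr_ge0 opprK; exact: eigenvalue_ge_neg_r.
have k_gt0 : (0 < k%:R :> algC)%R by rewrite ltr0n !muln_gt0 al_gt0 ltnW // ltnW.
have kt_gt0 : (0 < k%:R / t)%R.
  by rewrite -(ltrD2l 1) -card_l0 addr0 ltr1n.
have t_gt0 : (0 < t)%R by rewrite -invr_gt0 -(pmulr_rgt0 _ k_gt0).
have : ((al * m)%:R <= k%:R / t)%R.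
  by rewrite ler_pdivlMr // /k (natrM _ r) [X in (_ <= X)%R]mulrC ler_wpM2l ?ler0n.
by rewrite -(lerD2l 1) -card_l addrC natr1 ler_nat.
Qed.

Lemma line_col_clique l y : l \in C -> y \in l -> exists j, l = col_clique y j.
Proof.
move=> lC yl; have l_big := line_card_gt lC yl.
case: (clique_sub_cone (geom.1 l lC).1 yl) => [[i /subset_leq_card]|[j l_sub]].
  rewrite card_row_clique => /(leq_trans l_big).
  by rewrite ltnS mulnC leq_pmul2r // leqNgt r_lt_m.
by exists j; apply/eqP; rewrite eqEcard l_sub card_col_clique mulnC.
Qed.

Lemma col_clique_line y j : col_clique y j \in C.
Proof.
pose u : cell := ((Ordinal (ltnW m_gt1), j), Ordinal al_gt0).
have [l lC /andP [yl ul]] := line_through geom (adj_phi y u).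
have [j' lj'] := line_col_clique lC yl.
move: ul; rewrite lj' !inE (negbTE (phi_neq y u)) mem_phi inE /= => /eqP jj'.
by rewrite jj' -lj'.
Qed.

Lemma assembly_row_clique M p : assembly adj C M -> p \in M -> exists i, M = row_clique p i.
Proof.
case=> maxM MC pM; have [//|[j Mj]] := maximal_clique_cone maxM pM.
by move: MC; rewrite Mj col_clique_line.
Qed.

Section Assembly.
Variables (x : T) (M : {set T}) (c : nat).
Hypothesis asmM : assembly adj C M.
Hypothesis M_far : forall y, y \in M -> y \notin ball adj 1 x.
Hypothesis c2 : forall p, p \in Gamma adj 2 x ->
  #|Gamma adj 1 x :&: Gamma adj 1 p| = c * al.+1.
Hypothesis b2 : forall p, p \in Gamma adj 2 x ->
  #|Gamma adj 3 x :&: Gamma adj 1 p| = (r - c) * (al * m - al * c).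

Lemma notin_cone_Gamma2 p A : p \in Gamma adj 2 x -> x \notin cone p A.
Proof.
move=> /GammaS_notin_ball px; rewrite !inE negb_or; apply/andP; split.
  by apply: contraNneq px => <-; rewrite ball_ballS // in_ball0.
apply/imsetP => [[u _ xu]]; move: px; rewrite (@Gamma_ball _ _ 1) //.
by rewrite in_Gamma1 // xu adj_sym adj_phi.
Qed.

Definition near_cells p := [set u | phi p u \in Gamma adj 1 x].
Definition near_rows p := [set u.1.1 | u in near_cells p].
Definition near_cols p := [set u.1.2 | u in near_cells p].

Section NearCells.
Variable p : T.
Hypothesis px : p \in Gamma adj 2 x.

Lemma card_near_cells : #|near_cells p| = c * al.+1.
Proof.
rewrite -(c2 px) (Gamma1_imset p) setI_imset card_imset; last exact: phi_inj.
by apply: eq_card => u; rewrite !inE.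
Qed.

Lemma near_cells_in_cone A u : maximal_clique adj (cone p A) -> u \in A ->
  u \in near_cells p -> #|[set v in A | v \in near_cells p]| = al.+1.
Proof.
move=> maxA uA uN; rewrite -(card_Gamma1_maximal_clique maxA (w := phi p u) (x := x)).
- rewrite setI_cone_notin; last first.
    by apply: contra (GammaS_notin_ball px) => /(@Gamma_ball _ _ 1).
  by rewrite card_imset; [apply: eq_card => v; rewrite !inE | exact: phi_inj].
- by rewrite !inE mem_phi uA orbT.
- exact: notin_cone_Gamma2.
- by move: uN; rewrite inE in_Gamma1 // adj_sym.
Qed.

Lemma card_near_cols : #|near_cols p| = c.
Proof.
apply/eqP; rewrite -(eqn_pmul2r (ltn0Sn al)) -card_near_cells; apply/eqP/esym.
apply: card_uniform_fibers => u uN.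
rewrite -(near_cells_in_cone (col_clique_maximal p u.1.2) _ uN) ?inE //.
by apply: eq_card => v; rewrite !inE andbC eq_sym.
Qed.

Lemma card_near_rows : #|near_rows p| = c.
Proof.
apply/eqP; rewrite -(eqn_pmul2r (ltn0Sn al)) -card_near_cells; apply/eqP/esym.
apply: card_uniform_fibers => u uN.
rewrite -(near_cells_in_cone (row_clique_maximal p u.1.1) _ uN) ?inE //.
by apply: eq_card => v; rewrite !inE andbC eq_sym.
Qed.

Definition far_cells : {set cell} := ~: grid_rows (near_rows p) :&: ~: grid_cols (near_cols p).

Lemma notin_far_ball2 u : u \notin far_cells -> phi p u \in ball adj 2 x.
Proof.
move=> uF; have [w wN wu_line] :
    exists2 w, w \in near_cells p & (w.1.1 == u.1.1) || (w.1.2 == u.1.2).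
  by move: uF; rewrite !inE negb_and !negbK => /orP [] /imsetP [w wN ->];
    exists w; rewrite ?eqxx ?orbT.
have wx : phi p w \in ball adj 1 x by rewrite in_set in wN; rewrite (@Gamma_ball _ _ 1).
have [<-|wu] := eqVneq w u; first exact: ball_ballS.
by apply: ball_adj wx _; rewrite phi_adj grid_extE wu.
Qed.

(* The inclusion holds by [notin_far_ball2], and both sides have b_2 elements. *)
Lemma Gamma3_Gamma1_far : Gamma adj 3 x :&: Gamma adj 1 p = phi p @: far_cells.
Proof.
apply/eqP; rewrite eqEcard card_imset; last exact: phi_inj.
rewrite card_grid_off_rows_cols card_near_rows card_near_cols b2 // -mulnBr.
rewrite (_ : _ * _ * al = (r - c) * (al * (m - c))) ?leqnn ?andbT; last by ring.
apply/subsetP => z /setIP [z3 /Gamma1_phi [u zu]]; rewrite zu mem_phi.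
by apply: contraLR z3 => /notin_far_ball2; rewrite -zu in_GammaS => ->; rewrite andbF.
Qed.

End NearCells.

Lemma Gamma2_assembly_cone p : p \in Gamma adj 2 x :&: M ->
  exists i, Gamma adj 2 x :&: M = cone p (grid_row i :&: grid_cols (near_cols p)).
Proof.
case/setIP => px pM; have [i Mi] := assembly_row_clique asmM pM; exists i.
have row_M u : u \in grid_row i -> phi p u \in M by move=> ui; rewrite Mi !inE mem_phi ui orbT.
have i_far : i \notin near_rows p.
  apply/imsetP => [[u uN iu]]; apply: (negP (M_far (row_M u _))); first by rewrite inE iu.
  by rewrite in_set in uN; rewrite (@Gamma_ball _ _ 1).
rewrite Mi setI_cone_in //; congr cone; apply/setP => u; rewrite in_set in_setI.
have [ui|//] := boolP (u \in grid_row i); rewrite [u \in grid_cols _]in_set !andTb.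
have [uJ|uJ] := boolP (u.1.2 \in near_cols p).
  by rewrite in_GammaS M_far ?row_M // notin_far_ball2 // !inE uJ andbF.
have : phi p u \in phi p @: far_cells p by move: ui; rewrite mem_phi !inE => /eqP ->; rewrite i_far.
rewrite -Gamma3_Gamma1_far // => /setIP [].
by rewrite !in_GammaS => /andP [_ /negbTE ->].
Qed.

Lemma Gamma2_assembly_design : (exists2 y, y \in M & y \in Gamma adj 2 x) ->
  is_design 2 (al * c + 1) (al + 1) 1 (Gamma adj 2 x :&: M) (lines_on C (Gamma adj 2 x :&: M)).
Proof.
case=> p0 p0M p0x; set B := Gamma adj 2 x :&: M; split; [|split].
- have [i ->] : exists i, B = cone p0 (grid_row i :&: grid_cols (near_cols p0)).
    by apply: Gamma2_assembly_cone; apply/setIP.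
  by rewrite card_cone card_grid_rowIcols card_near_cols // addn1 mulnC.
- move=> _ /imsetP [l /setIdP [lC lB2] ->]; split; first exact: subsetIr.
  have [p /setIP [pl pB]] : exists p, p \in l :&: B.
    by apply/set0Pn; rewrite -card_gt0 (leq_trans _ lB2).
  have [i Bi] : exists i, B = _ := Gamma2_assembly_cone pB.
  have [j lj] := line_col_clique lC pl.
  have lB : l :&: B = cone p (grid_row i :&: grid_cols (near_cols p) :&: grid_col j).
    rewrite Bi setI_cone_in //; congr cone; apply/setP => u.
    by rewrite in_set [RHS]in_setI lj in_setU1 (negbTE (phi_neq p u)) mem_phi.
  rewrite lB grid_rowIcolsIcol in lB2 *.
  by case: ifP lB2 => _; rewrite card_cone ?cards0 ?card_grid_rowIcol ?addn1.
move=> S SB /eqP/cards2P [q1 [q2 [q12 S12]]].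
move: SB; rewrite S12 subUset !sub1set => /andP [/setIP [q1x q1M] /setIP [q2x q2M]].
have q12_adj : adj q1 q2 by apply: asmM.1.1.
have [l lC ql] := line_through geom q12_adj.
apply/eqP/cards1P; exists (l :&: B); apply/setP => blk; rewrite in_set1 in_set.
apply/andP/eqP => [[/imsetP [l' /setIdP [l'C _] ->]]|->].
  rewrite subUset !sub1set !in_setI => /andP [/andP [q1l' _] /andP [q2l' _]].
  by rewrite (line_unique geom q12_adj l'C lC) // q1l'.
have q12_lB : [set q1; q2] \subset l :&: B.
  by case/andP: ql => q1l q2l; rewrite subUset !sub1set !in_setI q1l q2l q1x q2x q1M q2M.
split=> //; apply/imsetP; exists l => //; rewrite inE lC.
by rewrite (leq_trans _ (subset_leq_card q12_lB)) // cards2 q12.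
Qed.

End Assembly.

End LocalGrid.

Lemma qint_sum b n : 1 < b -> qint b n = \sum_(i < n) b ^ i.
Proof.
move=> b_gt1; rewrite /qint.
suff -> : b ^ n - 1 = (b - 1) * \sum_(i < n) b ^ i by rewrite mulKn // subn_gt0.
elim: n => [|n IHn]; first by rewrite big_ord0 expn0 subnn muln0.
rewrite big_ord_recr /= mulnDr -IHn expnS.
have : 0 < b ^ n by rewrite expn_gt0 ltnW.
set x := b ^ n; nia.
Qed.

Lemma qint1 b : 1 < b -> qint b 1 = 1.
Proof. by move=> b_gt1; rewrite qint_sum // big_ord1. Qed.

Lemma qint2 b : 1 < b -> qint b 2 = b + 1.
Proof. by move=> b_gt1; rewrite qint_sum // big_ord_recr big_ord1 /= addnC. Qed.

Lemma qint2_le b D : 1 < b -> 2 <= D -> b + 1 <= qint b D.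
Proof.
move=> b_gt1 D_ge2; rewrite -qint2 // !qint_sum // -!(big_mkord xpredT).
by rewrite [X in _ <= X](big_cat_nat _ (n := 2)) //= leq_addr.
Qed.

Section ClassicalParameters.
Variables (T : finType) (adj : rel T) (D b al be : nat).
Hypotheses (b_gt1 : 1 < b) (D_ge2 : 2 <= D).
Hypothesis classical : classical_parameters adj D b al be.

Lemma classical_c2 x p : p \in Gamma adj 2 x ->
  #|Gamma adj 1 x :&: Gamma adj 1 p| = (b + 1) * al.+1.
Proof.
have [bi [ci [[_ [_ [_ cE]]] [_ ciE]]]] := classical.
by move=> px; rewrite (cE 2) ?ciE // qint2 // qint1 // muln1 add1n.
Qed.

Lemma classical_b2 x p : al * (b + 1) <= be -> p \in Gamma adj 2 x ->
  #|Gamma adj 3 x :&: Gamma adj 1 p| = (qint b D - (b + 1)) * (be - al * (b + 1)).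
Proof.
have [bi [ci [[_ [_ [bE _]]] [biE _]]]] := classical.
move=> be_ge px; rewrite (bE 2) //; apply/eqP; rewrite -eqz_nat biE // qint2 //.
by rewrite PoszM !subzn ?qint2_le.
Qed.

End ClassicalParameters.

Theorem theorem28 (T : finType) (adj : rel T) (D b alpha beta : nat)
  (C : {set {set T}}) :
  2 <= b -> 1 <= alpha -> alpha <= b - 1 -> 3 <= D ->
  classical_parameters adj D b alpha beta ->
  geometric adj (qint b D * beta) C ->
  (exists m : nat, beta = alpha * m /\
     forall x : T, local_graph_iso adj x
       (clique_ext_adj (grid_adj m (qint b D)) alpha)) ->
  alpha * qint b D < beta ->
  forall (M : {set T}) (x : T),
    assembly adj C M -> dist_set_2 adj x M ->
    is_design 2 (alpha * (b + 1) + 1) (alpha + 1) 1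
      (Gamma adj 2 x :&: M) (lines_on C (Gamma adj 2 x :&: M)) /\
    (alpha + 1 %| b * (b + 1)).
Proof.
move=> b_gt1 al_gt0 _ D_ge3 classical geom [m [beta_am local]] beta_gt M x asmM [Mx M_far].
have D_ge2 : 2 <= D by apply: ltnW.
have [_ [_ [[[adj_sym adj_irr] _] _]]] := classical.
have r_ge := qint2_le b_gt1 D_ge2.
have r_lt_m : qint b D < m by rewrite -(ltn_pmul2l al_gt0) -beta_am.
have [phi phi_local] := fin_all_exists local.
have c2 := classical_c2 b_gt1 D_ge2 classical (x := x).
have b2 p := classical_b2 b_gt1 D_ge2 classical (x := x) (p := p).
rewrite beta_am leq_pmul2l // in b2; rewrite beta_am in geom.
have r_gt1 : 1 < qint b D by apply: leq_trans r_ge; rewrite addn1 ltnW.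
have design := Gamma2_assembly_design adj_sym adj_irr (ltn_trans r_gt1 r_lt_m) r_gt1 al_gt0 r_lt_m
  phi_local geom asmM M_far c2 (fun p => b2 p (ltnW (leq_ltn_trans r_ge r_lt_m))) Mx.
split; first exact: design.
by move: (design_dvd al_gt0 design); rewrite -subn1 addnK.
Qed.
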